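(* Let $\mathbf a=(a_1,\dots,a_m)$ be an admissible sequence and suppose there is $k$ with $1\le k<m$ and $a_k\le 2k$. Put $\mathbf a'=(a_1,\dots,a_k)$ and $\mathbf a''=(a_{k+1}-2k,\dots,a_m-2k)$. Then $\mathbf a'$ and $\mathbf a''$ are admissible, and for every nonnegative integer $x$, $$\det\mathbf m(\mathbf a,x)=\det\mathbf m(\mathbf a',x)\cdot\det\mathbf m(\mathbf a'',x+k).$$
   Context: $q$ is an indeterminate; $(a;q)_n=\prod_{j=0}^{n-1}(1-aq^j)$ for $n\ge0$. A finite sequence of integers $\mathbf a=(a_1,\dots,a_m)$ is admissible if it is strictly increasing and $2i-1\le a_i\le 2m$ for all $1\le i\le m$. For a sequence $\mathbf a$ of length $m$ and a nonnegative integer $x$, $\mathbf m(\mathbf a,x)$ is the $m\times m$ matrix with $(i,j)$-entry $\frac{(q^{2i+2x};q^2)_{a_j+1-2i}}{(q;q)_{a_j+1-2i}}$ if $a_j+1-2i\ge 0$ and $0$ otherwise. *)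

From mathcomp Require Import all_boot all_order all_algebra.
Set Implicit Arguments. Unset Strict Implicit. Unset Printing Implicit Defensive.
Import Order.TTheory GRing.Theory Num.Theory.
Local Open Scope ring_scope.

Definition RF := {fraction {poly rat}}.
Definition q : RF := tofrac 'X.

Definition qpoch (a b : RF) (n : nat) : RF := \prod_(j < n) (1 - a * b ^+ j).

(* Admissible: strictly increasing and 2i-1 <= a_i <= 2m (1-indexed i),
   i.e. with 0-indexed i: 2i+1 <= a`_i <= 2m. *)
Definition admissible (a : seq int) : Prop :=
  sorted (fun x y : int => x < y) a /\
  forall i : nat, (i < size a)%N ->
    (2 * i%:Z + 1 <= nth 0 a i) /\ (nth 0 a i <= 2 * (size a)%:Z).

(* m(a,x): (i,j)-entry (1-indexed) (q^{2i+2x};q^2)_{a_j+1-2i} / (q;q)_{a_j+1-2i}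
   if a_j+1-2i >= 0, else 0.  With 0-indexed i', j': i = i'+1. *)
Definition mmat (a : seq int) (x : nat) : 'M[RF]_(size a) :=
  \matrix_(i < size a, j < size a)
    let e : int := nth 0 a j + 1 - 2 * (i.+1)%:Z in
    if (0 <= e) then
      qpoch (q ^+ (2 * i.+1 + 2 * x)) (q ^+ 2) `|e|%N / qpoch q q `|e|%N
    else 0.

From mathcomp Require Import all_boot all_order all_algebra.
From mathcomp Require Import zify.
Import Order.TTheory GRing.Theory Num.Theory.
Local Open Scope ring_scope.

(* When a_k <= 2k (1-indexed), every
   column j <= k has a_j <= 2k, so the entries in rows i > k of these columns
   have exponent a_j + 1 - 2i < 0 and vanish: m(a,x) is block upper
   triangular with diagonal blocks of sizes k and m - k.  The upper-left block
   is m(a',x), and shifting both indices by k turns the lower-right block into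
   m(a'',x+k), since a_{k+j} + 1 - 2(k+i) = (a_{k+j} - 2k) + 1 - 2i and
   q^{2(k+i)+2x} = q^{2i+2(x+k)}. *)

Lemma det_mx_cast {R : comPzRingType} {n m : nat} (f : nat -> nat -> R) :
  n = m -> \det (\matrix_(i < n, j < n) f i j) = \det (\matrix_(i < m, j < m) f i j).
Proof. by move->. Qed.

Lemma det_mx_block_upper {R : comPzRingType} (n k : nat) (f : nat -> nat -> R) :
  (k <= n)%N -> (forall i j, (j < k <= i)%N -> f i j = 0) ->
  \det (\matrix_(i < n, j < n) f i j) =
  \det (\matrix_(i < k, j < k) f i j) *
  \det (\matrix_(i < n - k, j < n - k) f (k + i)%N (k + j)%N).
Proof.
move=> le_kn f_lower; rewrite (det_mx_cast f (esym (subnKC le_kn))).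
set M := \matrix_(i < k + (n - k), j < k + (n - k)) f i j.
have dlM : dlsubmx M = 0.
  by apply/matrixP => i j; rewrite !mxE f_lower //= ltn_ord leq_addr.
rewrite -(submxK M) dlM det_ublock.
by congr (_ * _); congr (\det _); apply/matrixP => i j; rewrite !mxE.
Qed.

Lemma sorted_nth_le_pred (a : seq int) (k j : nat) :
  sorted <%O a -> (k <= size a)%N -> (j < k)%N -> nth 0 a j <= nth 0 a k.-1.
Proof.
case: k => // k srt le_k ltjk.
by rewrite (lt_sorted_leq_nth 0 srt) ?inE /=; lia.
Qed.

Lemma admissible_take (a : seq int) (k : nat) :
  admissible a -> (k <= size a)%N ->
  (forall j, (j < k)%N -> nth 0 a j <= 2 * k%:Z) -> admissible (take k a).
Proof.
move=> [srt adm] le_k bound; split; first exact: take_sorted.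
move=> i; rewrite size_take_min (minn_idPl le_k) => ltik.
rewrite nth_take //; split; last exact: bound.
by have [] := adm i (leq_trans ltik le_k).
Qed.

Lemma admissible_shift_drop (a : seq int) (k : nat) :
  admissible a -> (k <= size a)%N ->
  admissible [seq y - 2 * k%:Z | y <- drop k a].
Proof.
move=> [srt adm] le_k; split.
  rewrite sorted_map; apply: drop_sorted.
  by apply: sub_sorted srt => u v /=; rewrite ltrBlDr subrK.
move=> i; rewrite size_map size_drop => lti.
rewrite (nth_map 0) ?size_drop // nth_drop -subzn //.
have [lo hi] := adm (k + i)%N ltac:(by rewrite -ltn_subRL).
move: lo hi; rewrite PoszD; move: (nth 0 a (k + i)) (size a) => v s; lia.
Qed.

Definition mentry (a : seq int) (x i j : nat) : RF :=
  let e : int := nth 0 a j + 1 - 2 * (i.+1)%:Z in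
  if (0 <= e) then
    qpoch (q ^+ (2 * i.+1 + 2 * x)) (q ^+ 2) `|e|%N / qpoch q q `|e|%N
  else 0.

Lemma mmatE (a : seq int) (x : nat) :
  mmat a x = \matrix_(i < size a, j < size a) mentry a x i j.
Proof. by apply/matrixP => i j; rewrite !mxE. Qed.

Lemma mentry_lower (a : seq int) (x k i j : nat) :
  nth 0 a j <= 2 * k%:Z -> (k <= i)%N -> mentry a x i j = 0.
Proof.
rewrite /mentry => bound le_ki; case: ifP => // nonneg.
by move: nonneg bound; move: (nth 0 a j) => v; lia.
Qed.

Lemma mentry_take (a : seq int) (x k i j : nat) :
  (j < k)%N -> mentry (take k a) x i j = mentry a x i j.
Proof. by move=> ltjk; rewrite /mentry nth_take. Qed.

Lemma mentry_shift_drop (a : seq int) (x k i j : nat) :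
  (j < size a - k)%N ->
  mentry [seq y - 2 * k%:Z | y <- drop k a] (x + k) i j =
  mentry a x (k + i) (k + j).
Proof.
move=> ltj; rewrite /mentry (nth_map 0) ?size_drop // nth_drop.
have -> : nth 0 a (k + j) - 2 * k%:Z + 1 - 2 * i.+1%:Z =
          nth 0 a (k + j) + 1 - 2 * (k + i).+1%:Z.
  by move: (nth 0 a (k + j)) => v; lia.
by have -> : (2 * i.+1 + 2 * (x + k) = 2 * (k + i).+1 + 2 * x)%N by lia.
Qed.

Theorem mainTheorem5 (a : seq int) (k : nat) :
  admissible a -> (1 <= k)%N -> (k < size a)%N -> nth 0 a k.-1 <= 2 * k%:Z ->
  let a' := take k a in
  let a'' := [seq y - 2 * k%:Z | y <- drop k a] in
  admissible a' /\ admissible a'' /\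
  forall x : nat,
    \det (mmat a x) = \det (mmat a' x) * \det (mmat a'' (x + k)).
Proof.
move=> adm _ ltk hk a' a''.
have le_k := ltnW ltk.
have bound j : (j < k)%N -> nth 0 a j <= 2 * k%:Z.
  by move=> ltjk; apply: le_trans hk; apply: sorted_nth_le_pred adm.1 le_k ltjk.
split; first exact: admissible_take.
split; first exact: admissible_shift_drop.
move=> x; rewrite !mmatE (@det_mx_block_upper _ _ k _ le_k); last first.
  by move=> i j /andP[ltjk le_ki]; apply: mentry_lower (bound j ltjk) le_ki.
congr (_ * _).
  rewrite (det_mx_cast _ (size_takel le_k)); congr (\det _).
  by apply/matrixP => i j; rewrite !mxE mentry_take.
have size_a'' : size a'' = (size a - k)%N by rewrite size_map size_drop.
rewrite (det_mx_cast _ size_a''); congr (\det _).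
by apply/matrixP => i j; rewrite !mxE mentry_shift_drop.
Qed.
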